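(* Let $n$ be a positive integer and $m$ a positive even integer. Let $\mathcal{A}$ and $\mathcal{B}$ be $m$-th order $n$-dimensional real weakly symmetric tensors with $\mathcal{B}$ positive definite, and let $\lambda_{\max}$ be the largest $\mathcal{B}_r$-eigenvalue of $\mathcal{A}$. Define $f_2:\mathbb{R}^n\to\mathbb{R}$ by $$f_2(x)=\frac{1}{2m}(\mathcal{B}x^m)^2-\frac{1}{m}\mathcal{A}x^m,$$ whose gradient is $\nabla f_2(x)=(\mathcal{B}x^m)\,\mathcal{B}x^{m-1}-\mathcal{A}x^{m-1}$. Then: (a) $f_2$ is coercive on $\mathbb{R}^n$, i.e. $f_2(x)\to+\infty$ as $\|x\|\to\infty$. (b) The critical points of $f_2$ are (i) $x=0$, and (ii) any $\mathcal{B}_r$-eigenvector $x$ of $\mathcal{A}$ associated with a $\mathcal{B}_r$-eigenvalue $\lambda>0$ of $\mathcal{A}$ satisfying $\mathcal{B}x^m=\lambda$. (c) If $\lambda_{\max}>0$, then $f_2$ attains its global minimum value $\min f_2(x)=-\frac{1}{2m}\lambda_{\max}^2$ at any $\mathcal{B}_r$-eigenvector associated with $\lambda_{\max}$ satisfying $\mathcal{B}x^m=\lambda_{\max}$. (d) If $\lambda_{\max}\le0$, then $x=0$ is the unique critical point of $f_2$, and it is the unique global minimizer of $f_2$ on $\mathbb{R}^n$.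
   Context: An $m$-th order $n$-dimensional real tensor is an array $\mathcal{A}=(A_{i_1\cdots i_m})$ with indices in $\{1,\dots,n\}$ and real entries. For $x\in\mathbb{R}^n$, $\mathcal{A}x^m=\sum_{i_1,\dots,i_m=1}^n A_{i_1\cdots i_m}x_{i_1}\cdots x_{i_m}$, and $\mathcal{A}x^{m-1}\in\mathbb{R}^n$ has $i$-th entry $\sum_{i_2,\dots,i_m=1}^n A_{i i_2\cdots i_m}x_{i_2}\cdots x_{i_m}$. A tensor is weakly symmetric if $\nabla(\mathcal{A}x^m)=m\,\mathcal{A}x^{m-1}$ for all $x$, and positive definite if $\mathcal{A}x^m>0$ for all $x\ne0$. With $\mathcal{B}$ weakly symmetric positive definite, $\lambda\in\mathbb{R}$ is a $\mathcal{B}_r$-eigenvalue of $\mathcal{A}$, with $\mathcal{B}_r$-eigenvector $x\in\mathbb{R}^n\setminus\{0\}$, if $\mathcal{A}x^{m-1}=\lambda\,\mathcal{B}x^{m-1}$. The set of $\mathcal{B}_r$-eigenvalues is nonempty and has a largest element $\lambda_{\max}$. *)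

From HB Require Import structures.
From mathcomp Require Import all_boot all_order all_algebra.
From mathcomp Require Import all_classical all_reals all_analysis.
Set Implicit Arguments. Unset Strict Implicit. Unset Printing Implicit Defensive.
Import Order.TTheory GRing.Theory Num.Theory.
Import numFieldNormedType.Exports.
Local Open Scope ring_scope.

(* An m-th order n-dimensional real tensor: entries A_{i_1 ... i_m} are
   A [:: i_1; ...; i_m]; only the values on index sequences of length m matter. *)
Definition tensor (R : realType) (n : nat) := seq 'I_n -> R.

Definition txm (R : realType) (n m : nat) (A : tensor R n) (x : 'rV[R]_n) : R :=
  \sum_(t : m.-tuple 'I_n) A (tval t) * \prod_(j <- tval t) x ord0 j.

Definition txm1 (R : realType) (n m : nat) (A : tensor R n) (x : 'rV[R]_n)
  : 'rV[R]_n :=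
  \row_(i < n) \sum_(t : m.-1.-tuple 'I_n) A (i :: tval t) * \prod_(j <- tval t) x ord0 j.

Definition evec (R : realType) (n : nat) (i : 'I_n) : 'rV[R]_n := delta_mx ord0 i.

Definition has_gradient (R : realType) (n : nat) (f : 'rV[R]_n -> R) (x g : 'rV[R]_n) :=
  forall i : 'I_n, is_derive x (evec R i) f (g ord0 i).

Definition weakly_symmetric (R : realType) (n m : nat) (A : tensor R n) :=
  forall x : 'rV[R]_n, has_gradient (txm m A) x (m%:R *: txm1 m A x).

Definition pos_def (R : realType) (n m : nat) (B : tensor R n) :=
  forall x : 'rV[R]_n, x != 0 -> 0 < txm m B x.

Definition Br_eigenpair (R : realType) (n m : nat) (A B : tensor R n)
  (lam : R) (x : 'rV[R]_n) :=
  x != 0 /\ txm1 m A x = lam *: txm1 m B x.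

Definition Br_eigenvalue (R : realType) (n m : nat) (A B : tensor R n) (lam : R) :=
  exists x, Br_eigenpair m A B lam x.

Definition critical_point (R : realType) (n : nat) (f : 'rV[R]_n -> R) (x : 'rV[R]_n) :=
  has_gradient f x 0.

Definition coercive (R : realType) (n : nat) (f : 'rV[R]_n -> R) :=
  forall M : R, exists r : R, forall x : 'rV[R]_n, r <= `|x| -> M <= f x.

Definition f2 (R : realType) (n m : nat) (A B : tensor R n) (x : 'rV[R]_n) : R :=
  (2 * m%:R)^-1 * (txm m B x) ^+ 2 - (m%:R)^-1 * txm m A x.

(* The Rayleigh quotient A x^m / B x^m attains its maximum rho on the unit
   sphere at some c; then A x^m - rho B x^m is maximal (with value 0) at c, so
   its gradient vanishes and rho is a B_r-eigenvalue.  Hence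
   A y^m <= lam_max B y^m for all y, and completing the square in b = B y^m gives
   f2 y >= ((b - lam_max)^2 - lam_max^2) / (2m).  Together with
   B y^m >= beta |y|^m (compactness of the sphere again) this bound yields
   coercivity, the minimum value in (c) and the positivity of f2 off 0 in (d).
   The critical points are read off the gradient: it vanishes at x <> 0 exactly
   when x is an eigenvector for the eigenvalue B x^m > 0. *)

From HB Require Import structures.
From mathcomp Require Import all_boot all_order all_algebra.
From mathcomp Require Import all_classical all_reals all_analysis.
From mathcomp Require Import ring lra.
Import Order.TTheory GRing.Theory Num.Theory.
Import numFieldNormedType.Exports.
Set Implicit Arguments. Unset Strict Implicit. Unset Printing Implicit Defensive.
Local Open Scope ring_scope.

Lemma prodrMl_seq (R : comPzSemiRingType) (I : Type) (s : seq I) (c : R) (F : I -> R) :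
  \prod_(i <- s) (c * F i) = c ^+ size s * \prod_(i <- s) F i.
Proof.
elim: s => [|a s IH]; first by rewrite !big_nil mulr1.
by rewrite !big_cons IH exprS mulrACA.
Qed.

Section TensorForm.
Variables (R : realType) (n m : nat).
Implicit Types (A B : tensor R n) (x y : 'rV[R]_n).

Lemma txmZ A (c : R) x : txm m A (c *: x) = c ^+ m * txm m A x.
Proof.
rewrite /txm big_distrr; apply: eq_bigr => t _.
under eq_bigr do rewrite mxE.
by rewrite prodrMl_seq size_tuple mulrCA.
Qed.

Lemma txm_normalize A x : x != 0 -> txm m A x = `|x| ^+ m * txm m A (`|x|^-1 *: x).
Proof. by move=> x0; rewrite -txmZ scalerA divff ?scale1r ?normr_eq0. Qed.

Lemma txm_continuous A : continuous (txm m A).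
Proof.
move=> x; apply: (@continuous_big _ _ +%R 0 predT add_continuous) => t _ y.
apply: continuousM; first exact: cst_continuous.
exact: (@continuous_big R^o 'I_n *%R 1 predT mul_continuous _ (tval t)
  (fun j (x : 'rV[R]_n) => x ord0 j) (fun j _ => @coord_continuous R 1 n ord0 j)).
Qed.

Lemma txm1_0 A : (1 < m)%N -> txm1 m A 0 = 0.
Proof.
move=> m_gt1; apply/rowP => i; rewrite !mxE; apply: big1 => -[[|a s] /= st].
  by move: st; rewrite eq_sym -(subnKC m_gt1).
by rewrite big_cons mxE mul0r mulr0.
Qed.

Hypothesis m_gt0 : (0 < m)%N.

Lemma txm0 A : txm m A 0 = 0.
Proof.
by rewrite -(scale0r (0 : 'rV[R]_n)) txmZ expr0n eqn0Ngt m_gt0 mul0r.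
Qed.

Lemma txm_euler A x : txm m A x = \sum_i x ord0 i * txm1 m A x ord0 i.
Proof.
move: m_gt0; case: m => // k _.
rewrite /txm /txm1.
under [RHS]eq_bigr do rewrite mxE big_distrr.
rewrite pair_big /=.
rewrite (reindex (fun p : 'I_n * k.-tuple 'I_n => [tuple of p.1 :: tval p.2])) /=.
  by apply: eq_bigr => p _; rewrite big_cons /= mulrCA.
exists (fun t : k.+1.-tuple 'I_n => (thead t, [tuple of behead t])).
  by move=> [i t] _ /=; congr pair; apply: val_inj.
by move=> t _; rewrite [RHS]tuple_eta; apply: val_inj.
Qed.

Lemma eigenpair_txm A B lam x : Br_eigenpair m A B lam x -> txm m A x = lam * txm m B x.
Proof.
move=> [_ e]; rewrite !txm_euler e big_distrr; apply: eq_bigr => i _.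
by rewrite [in LHS]mxE mulrCA.
Qed.

Lemma pos_def_txm_ge0 B x : pos_def m B -> 0 <= txm m B x.
Proof.
move=> PB; have [->|x0] := eqVneq x 0; first by rewrite txm0.
exact/ltW/PB.
Qed.

End TensorForm.

Section DirectionalDerivative.
Variables (R : realType) (V : normedModType R).

Lemma is_derive_line (f : V -> R) a e (t l : R) :
  is_derive (a + t *: e) e f l -> is_derive t 1 (fun s : R => f (a + s *: e)) l.
Proof.
move=> [df dv].
have E : (fun h : R => h^-1 *: (((fun s : R => f (a + s *: e)) \o shift t) (h *: 1)
            - f (a + t *: e))) =
         (fun h : R => h^-1 *: ((f \o shift (a + t *: e)) (h *: e) - f (a + t *: e))).
  apply: funext => h /=; congr (_ *: (f _ - _)).
  by rewrite scaler1 scalerDl addrCA addrA.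
by split; [rewrite /derivable E | rewrite /derive E].
Qed.

Lemma is_derive_max_eq0 (f : V -> R) a e (l : R) :
  (forall y, f y <= f a) -> (forall y, derivable f y e) ->
  is_derive a e f l -> l = 0.
Proof.
move=> fmax fd fl; pose h s := f (a + s *: e).
have dh t : derivable h t 1.
  by have [] := is_derive_line (derivableP (fd (a + t *: e))).
have h0 : is_derive (0 : R) 1 h 0.
  apply: (@derive1_at_max R h (-1) 1 0).
  - by rewrite (le_trans (lerN10 R)) // ler01.
  - by move=> t _; exact: dh.
  - by rewrite in_itv /= ltrN10 ltr01.
  - by move=> t _; rewrite /h scale0r addr0; exact: fmax.
have hl : is_derive (0 : R) 1 h l by apply: is_derive_line; rewrite scale0r addr0.
by rewrite -(@derive_val _ _ _ _ _ _ _ hl) (@derive_val _ _ _ _ _ _ _ h0).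
Qed.

End DirectionalDerivative.

Section Rayleigh.
Variables (R : realType) (n m : nat).
Hypothesis m_gt0 : (0 < m)%N.
Implicit Types (A B : tensor R n) (x y : 'rV[R]_n).

Definition unit_sphere : set 'rV[R]_n := [set x | `|x| = 1]%classic.

Lemma compact_unit_sphere : compact unit_sphere.
Proof.
apply: bounded_closed_compact.
  rewrite /= /bounded_near; near=> M => x /= ->.
  near: M; apply: nbhs_pinfty_ge; exact: num_real.
apply: (@preimage_closed _ _ (@Num.norm R 'rV[R]_n) [set 1]%classic).
  by move=> y _; exact: norm_continuous.
exact: closed_eq.
Unshelve. all: by end_near.
Qed.

Lemma unit_sphere_normalize x : x != 0 -> unit_sphere (`|x|^-1 *: x).
Proof. by move=> x0; rewrite /unit_sphere /= normrZV // unitfE normr_eq0. Qed.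

Lemma unit_sphere_neq0 x : unit_sphere x -> x != 0.
Proof. by rewrite /unit_sphere /=; apply: contra_eqN => /eqP->; rewrite normr0 eq_sym oner_eq0. Qed.

Lemma pos_def_txm_ge B : pos_def m B ->
  exists2 beta : R, 0 < beta & forall x, beta * `|x| ^+ m <= txm m B x.
Proof.
move=> PB; have [[x0 x00]|all0] := pselect (exists x0 : 'rV[R]_n, x0 != 0); last first.
  exists 1 => // x; have -> : x = 0 by apply/eqP/negPn/negP => x0; apply: all0; exists x.
  by rewrite txm0 // normr0 expr0n eqn0Ngt m_gt0 mulr0.
have [c cS cmin] : exists2 c, c \in unit_sphere &
    forall t, t \in unit_sphere -> txm m B c <= txm m B t.
  apply: EVT_min_rV; first by exists (`|x0|^-1 *: x0); exact: unit_sphere_normalize.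
    exact: compact_unit_sphere.
  exact/continuous_subspaceT/txm_continuous.
exists (txm m B c); first by apply/PB/unit_sphere_neq0; rewrite inE in cS.
move=> x; have [->|x_neq0] := eqVneq x 0.
  by rewrite txm0 // normr0 expr0n eqn0Ngt m_gt0 mulr0.
rewrite (txm_normalize m B x_neq0) mulrC ler_wpM2l ?exprn_ge0 //.
by apply: cmin; rewrite inE; apply: unit_sphere_normalize.
Qed.

Lemma txm_ratio_max A B x0 : pos_def m B -> x0 != 0 ->
  exists2 c, c != 0 & forall y, txm m A y <= txm m A c / txm m B c * txm m B y.
Proof.
move=> PB x00; pose g x := txm m A x / txm m B x.
have [c cS cmax] : exists2 c, c \in unit_sphere &
    forall t, t \in unit_sphere -> g t <= g c.
  apply: EVT_max_rV; first by exists (`|x0|^-1 *: x0); exact: unit_sphere_normalize.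
    exact: compact_unit_sphere.
  apply: continuous_in_subspaceT => u; rewrite inE => /unit_sphere_neq0 u0.
  apply: continuousM; first exact: txm_continuous.
  by apply: continuousV; [exact/lt0r_neq0/PB | exact: txm_continuous].
exists c; first by apply: unit_sphere_neq0; rewrite inE in cS.
move=> y; have [->|y0] := eqVneq y 0; first by rewrite !txm0 // mulr0.
rewrite (txm_normalize m A y0) (txm_normalize m B y0) mulrCA.
rewrite ler_wpM2l ?exprn_ge0 //.
set u := _ *: y; have u0 : u != 0 by exact/unit_sphere_neq0/unit_sphere_normalize.
rewrite -ler_pdivrMr ?PB //.
by apply: cmax; rewrite inE; apply: unit_sphere_normalize.
Qed.

(* [A x^m - rho B x^m] attains its maximum [0] at [c], so its gradient
   [m (A c^{m-1} - rho B c^{m-1})] vanishes there. *)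
Lemma eigenpair_of_txm_max A B rho c :
  weakly_symmetric m A -> weakly_symmetric m B -> c != 0 ->
  (forall y, txm m A y <= rho * txm m B y) -> txm m A c = rho * txm m B c ->
  Br_eigenpair m A B rho c.
Proof.
move=> WA WB c0 le_rho eq_rho; split => //.
pose phi := txm m A - rho \*: txm m B.
have phi_max y : phi y <= phi c.
  by rewrite /phi !fctE /= eq_rho subrr subr_le0; exact: le_rho.
have mR : (m%:R : R) != 0 by rewrite pnatr_eq0 -lt0n.
apply/rowP => i.
have dphi y : is_derive y (evec R i) phi
    ((m%:R *: txm1 m A y) ord0 i - rho *: (m%:R *: txm1 m B y) ord0 i).
  by have dA := WA y i; have dB := WB y i; exact: is_deriveB.
have phi_derivable y : derivable phi y (evec R i) by case: (dphi y).
have := is_derive_max_eq0 phi_max phi_derivable (dphi c).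
have scale_entry (M : 'rV[R]_n) : (m%:R *: M) ord0 i = m%:R * M ord0 i by rewrite mxE.
rewrite !scale_entry -[_ *: _]/(_ * _) mulrCA -mulrBr => /eqP.
by rewrite mulf_eq0 (negbTE mR) subr_eq0 => /eqP ->; rewrite [RHS]mxE.
Qed.

Lemma txm_le_max_eigenvalue A B lam_max :
  weakly_symmetric m A -> weakly_symmetric m B -> pos_def m B ->
  Br_eigenvalue m A B lam_max ->
  (forall lam, Br_eigenvalue m A B lam -> lam <= lam_max) ->
  forall y, txm m A y <= lam_max * txm m B y.
Proof.
move=> WA WB PB [x0 [x00 _]] lam_maxP.
have [c c0 le_c] := txm_ratio_max A PB x00.
set rho := _ / _ in le_c.
have rho_le : rho <= lam_max.
  apply: lam_maxP; exists c; apply: eigenpair_of_txm_max => //.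
  by rewrite /rho divfK // lt0r_neq0 ?PB.
move=> y; apply: (le_trans (le_c y)).
by rewrite ler_wpM2r // pos_def_txm_ge0.
Qed.

End Rayleigh.

Section ObjectiveF2.
Variables (R : realType) (n m : nat) (A B : tensor R n).
Hypotheses (m_gt0 : (0 < m)%N) (WA : weakly_symmetric m A) (WB : weakly_symmetric m B).
Implicit Types x y : 'rV[R]_n.

Lemma f2_gradient x :
  has_gradient (f2 m A B) x (txm m B x *: txm1 m B x - txm1 m A x).
Proof.
move=> i; have dA := WA x i; have dB := WB x i.
have -> : f2 m A B = (2 * m%:R)^-1 \*: (txm m B) ^+ 2 - (m%:R)^-1 \*: txm m A.
  by apply: funext => y; rewrite /f2 /= expr2.
apply: is_derive_eq.
have mR : (m%:R : R) != 0 by rewrite pnatr_eq0 -lt0n.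
rewrite !mxE /= expr1 -![_ *: _]/(_ * _).
by field.
Qed.

Lemma critical_point_f2E x :
  critical_point (f2 m A B) x <-> txm m B x *: txm1 m B x = txm1 m A x.
Proof.
have grad := f2_gradient x; split => [crit | eq_grad].
  apply/eqP; rewrite -subr_eq0; apply/eqP/rowP => i.
  by rewrite -(@derive_val _ _ _ _ _ _ _ (grad i)) (@derive_val _ _ _ _ _ _ _ (crit i)) !mxE.
by rewrite /critical_point -(subrr (txm1 m A x)) -{1}eq_grad.
Qed.

Lemma critical_point_f2 x : (1 < m)%N -> pos_def m B ->
  critical_point (f2 m A B) x <->
  x = 0 \/ exists lam, 0 < lam /\ Br_eigenpair m A B lam x /\ txm m B x = lam.
Proof.
move=> m_gt1 PB; rewrite critical_point_f2E; split => [eq_grad | ].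
  have [->|x0] := eqVneq x 0; first by left.
  by right; exists (txm m B x); split; [exact: PB | split].
case=> [->|[lam [_ [[_ ->] ->]]]] //.
by rewrite !txm1_0 // scaler0.
Qed.

Lemma f2_0 : f2 m A B 0 = 0.
Proof. by rewrite /f2 !txm0 // expr0n /= !mulr0 subrr. Qed.

Variable lam : R.
Hypothesis txm_le_lam : forall y, txm m A y <= lam * txm m B y.

(* Completing the square in [b = B y^m]. *)
Lemma f2_ge y :
  (2 * m%:R)^-1 * ((txm m B y - lam) ^+ 2 - lam ^+ 2) <= f2 m A B y.
Proof.
have q_gt0 : 0 < (m%:R : R)^-1 by rewrite invr_gt0 ltr0n.
have := ler_wpM2l (ltW q_gt0) (txm_le_lam y).
rewrite /f2 invfM; set q := (m%:R)^-1; set a := txm m A y; set b := txm m B y.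
move=> le_a.
have -> : 2^-1 * q * ((b - lam) ^+ 2 - lam ^+ 2) = 2^-1 * q * b ^+ 2 - q * (lam * b) :> R.
  by field.
by rewrite lerD2l lerN2.
Qed.

Lemma f2_ge_min y : - ((2 * m%:R)^-1 * lam ^+ 2) <= f2 m A B y.
Proof.
apply: le_trans (f2_ge y); rewrite mulrBr lerBrDr addrC subrr.
by rewrite mulr_ge0 ?sqr_ge0 // invr_ge0 mulr_ge0 ?ler0n.
Qed.

Lemma f2_eigenvector x : Br_eigenpair m A B lam x -> txm m B x = lam ->
  f2 m A B x = - ((2 * m%:R)^-1 * lam ^+ 2).
Proof.
move=> eig Bx; have mR : (m%:R : R) != 0 by rewrite pnatr_eq0 -lt0n.
by rewrite /f2 (eigenpair_txm m_gt0 eig) Bx; field.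
Qed.

Hypothesis PB : pos_def m B.

Lemma txm_coercive : coercive (txm m B).
Proof.
have [beta beta_gt0 le_beta] := pos_def_txm_ge m_gt0 PB.
move=> K; exists (Num.max 1 (K / beta)) => x; rewrite ge_max => /andP[x_ge1 x_geK].
apply: le_trans (le_beta x); rewrite mulrC -ler_pdivrMr //.
by apply: le_trans x_geK (ler_eXnr _ _).
Qed.

Lemma f2_coercive : coercive (f2 m A B).
Proof.
have m_pos : (0 : R) < m%:R by rewrite ltr0n.
move=> M; have [r geK] := txm_coercive (`|lam| + lam ^+ 2 + 2 * m%:R * `|M| + 1).
exists r => x /geK; set b := txm m B x => b_ge.
apply: le_trans (f2_ge x); rewrite -/b ler_pdivlMl ?mulr_gt0 //.
have le_M : 2 * m%:R * M <= 2 * m%:R * `|M| by rewrite ler_wpM2l ?ler_norm ?mulr_ge0 ?ltW.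
have M_ge0 : 0 <= 2 * m%:R * `|M| by rewrite mulr_ge0 // mulr_ge0 // ltW.
have := sqr_ge0 lam; have := ler_norm lam => lam_le sqr_lam.
have d_ge1 : 1 <= b - lam by lra.
have : b - lam <= (b - lam) ^+ 2 by rewrite expr2 ler_peMl // (le_trans ler01).
lra.
Qed.

Lemma f2_gt0 y : lam <= 0 -> y != 0 -> 0 < f2 m A B y.
Proof.
move=> lam_le0 y0; have b_gt0 := PB y0; apply: lt_le_trans (f2_ge y).
rewrite mulr_gt0 ?invr_gt0 ?mulr_gt0 ?ltr0n //; set b := txm m B y in b_gt0 *.
nra.
Qed.

End ObjectiveF2.

Theorem theorem6 (R : realType) (n m : nat) (A B : tensor R n) (lam_max : R) :
  (0 < n)%N -> (0 < m)%N -> ~~ odd m ->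
  weakly_symmetric m A -> weakly_symmetric m B -> pos_def m B ->
  Br_eigenvalue m A B lam_max ->
  (forall lam, Br_eigenvalue m A B lam -> lam <= lam_max) ->
  (forall x : 'rV[R]_n, has_gradient (f2 m A B) x
      (txm m B x *: txm1 m B x - txm1 m A x)) /\
  coercive (f2 m A B) /\
  (forall x : 'rV[R]_n, critical_point (f2 m A B) x <->
     (x = 0 \/ exists lam, 0 < lam /\ Br_eigenpair m A B lam x /\ txm m B x = lam)) /\
  (0 < lam_max ->
     forall x, Br_eigenpair m A B lam_max x -> txm m B x = lam_max ->
       f2 m A B x = - ((2 * m%:R)^-1 * lam_max ^+ 2) /\
       (forall y, f2 m A B x <= f2 m A B y)) /\
  (lam_max <= 0 ->
     (forall x, critical_point (f2 m A B) x <-> x = 0) /\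
     (forall x, (forall y, f2 m A B x <= f2 m A B y) <-> x = 0)).
Proof.
move=> _ m_gt0 m_even WA WB PB lam_max_eig lam_maxP.
have m_gt1 : (1 < m)%N by move: m_gt0 m_even; case: (m) => [|[|]].
have le_lam := txm_le_max_eigenvalue m_gt0 WA WB PB lam_max_eig lam_maxP.
have crit x := critical_point_f2 m_gt0 WA WB x m_gt1 PB.
split; first exact: f2_gradient.
split; first exact: f2_coercive le_lam PB.
split; first exact: crit.
split.
  move=> _ x eig Bx; rewrite (f2_eigenvector m_gt0 eig Bx).
  by split=> // y; apply: f2_ge_min le_lam y.
move=> lam_le0; have f2_pos := f2_gt0 m_gt0 le_lam PB lam_le0.
split=> x.
  rewrite crit; split=> [[//|[lam [lam_gt0 [eig _]]]] | ->]; last by left.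
  have lam_le : lam <= lam_max by apply: lam_maxP; exists x.
  by have := lt_le_trans lam_gt0 (le_trans lam_le lam_le0); rewrite ltxx.
split=> [x_min | -> y]; last first.
  by have [->|y0] := eqVneq y 0; rewrite f2_0 // ltW ?f2_pos.
apply/eqP; apply: contraPT (x_min 0) => x0.
by apply/negP; rewrite f2_0 // -ltNge f2_pos.
Qed.
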